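(* Consider the problem \[ \min_{\hat{\mathbf W}\in\mathbb{R}^{(p+1)\times q},\ \mathbf z\in\mathbb{R}^m}\ f(\hat{\mathbf W},\mathbf z):=\tfrac12\langle \hat{\mathbf W},\hat{\mathbf W}\rangle+\beta\|\mathbf z_+\|_0 \quad\text{s.t.}\quad \mathbf 1+\mathscr A(\hat{\mathbf W})=\mathbf z,\ \ \operatorname{rank}(\hat{\mathbf W})\le r, \] where $\beta>0$, $r<\min\{p+1,q\}$ is a positive integer, $\mathbf A_1,\dots,\mathbf A_m\in\mathbb{R}^{(p+1)\times q}$ are given, and $\mathscr A(\hat{\mathbf W})=(\langle \mathbf A_1,\hat{\mathbf W}\rangle,\dots,\langle \mathbf A_m,\hat{\mathbf W}\rangle)^\top$. Let $(\hat{\mathbf W},\mathbf z)$ be a local minimizer of this problem and suppose the constraint qualification below (Assumption 1) holds at $\hat{\mathbf W}$. Then $(\hat{\mathbf W},\mathbf z)$ is a KKT point of the problem.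
   Context: Notation: $\langle \mathbf W,\mathbf Y\rangle=\operatorname{tr}(\mathbf W^\top\mathbf Y)$; $\mathbf 1\in\mathbb{R}^m$ is the all-ones vector; for $\mathbf z\in\mathbb{R}^m$, $\mathbf z_+$ is the componentwise positive part and $\|\mathbf z_+\|_0$ is the number of strictly positive entries of $\mathbf z$. The adjoint is $\mathscr A^*(\boldsymbol\lambda)=\sum_{i=1}^m \lambda_i\mathbf A_i$. Sets: $\mathcal L=\{(\hat{\mathbf W},\mathbf z): \mathbf 1+\mathscr A(\hat{\mathbf W})=\mathbf z\}$, $\mathcal R=\{\hat{\mathbf W}:\operatorname{rank}(\hat{\mathbf W})\le r\}$, feasible set $\mathcal F=\mathcal L\cap\mathcal R$ (viewed in $\mathbb{R}^{(p+1)\times q}\times\mathbb{R}^m$). For a set $C$ and $x\in C$, $\mathrm N_C(x)$ is the regular (Fréchet) normal cone $\{v:\limsup_{x'\to x,\,x'\in C,\,x'\neq x}\langle v,x'-x\rangle/\|x'-x\|\le 0\}$. Lagrangian: $\mathscr L(\hat{\mathbf W},\mathbf z,\boldsymbol\lambda)=\tfrac12\langle\hat{\mathbf W},\hat{\mathbf W}\rangle+\beta\|\mathbf z_+\|_0+\langle\boldsymbol\lambda,\mathbf 1+\mathscr A(\hat{\mathbf W})-\mathbf z\rangle$, with $\nabla_{\hat{\mathbf W}}\mathscr L=\hat{\mathbf W}+\mathscr A^*(\boldsymbol\lambda)$ and $\partial_{\mathbf z}\mathscr L=\beta\,\partial\|\mathbf z_+\|_0-\boldsymbol\lambda$, where the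 regular subdifferential is $\partial\|\mathbf z_+\|_0=\{\mathbf d\in\mathbb{R}^m: d_i=0 \text{ if } z_i\neq0,\ d_i\ge 0 \text{ if } z_i=0\}$. KKT point: $(\hat{\mathbf W},\mathbf z)$ is a KKT point if there exists $\boldsymbol\lambda\in\mathbb{R}^m$ such that $-\partial_{(\hat{\mathbf W},\mathbf z)}\mathscr L(\hat{\mathbf W},\mathbf z,\boldsymbol\lambda)\in \mathrm N_{\mathcal F}(\hat{\mathbf W},\mathbf z)$ (i.e., some element of the partial subdifferential of $\mathscr L$ in $(\hat{\mathbf W},\mathbf z)$ has its negative in the normal cone), $\operatorname{rank}(\hat{\mathbf W})\le r$, and $\mathbf 1+\mathscr A(\hat{\mathbf W})-\mathbf z=0$. Assumption 1 at $\hat{\mathbf W}$: let $s=\operatorname{rank}(\hat{\mathbf W})$ and $\hat{\mathbf W}=\mathbf U\Sigma\mathbf V^\top$ be an SVD with $\mathbf U$, $\mathbf V$ orthogonal of sizes $p+1$, $q$; let $\Gamma$ be the index set of nonzero singular values, $\Gamma_p^\perp=\{1,\dots,p+1\}\setminus\Gamma$, $\Gamma_q^\perp=\{1,\dots,q\}\setminus\Gamma$, and $\mathbf U_J$, $\mathbf V_J$ the column submatrices indexed by $J$. Define $\mathbf T^i=\begin{bmatrix}\mathbf U_\Gamma^\top\mathbf A_i\mathbf V_\Gamma & \mathbf U_\Gamma^\top\mathbf A_i\mathbf V_{\Gamma_q^\perp}\\ \mathbf U_{\Gamma_p^\perp}^\top\mathbf A_i\mathbf V_\Gamma & \mathbf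 O\end{bmatrix}$ and $\mathbf R^i=\mathbf U^\top\mathbf A_i\mathbf V_\Gamma$, $i=1,\dots,m$. The assumption is: if $s=r$, the matrices $\mathbf T^1,\dots,\mathbf T^m$ are linearly independent; if $s<r$, the matrices $\mathbf R^1,\dots,\mathbf R^m$ are linearly independent. *)

From HB Require Import structures.
From mathcomp Require Import all_boot all_order all_algebra.
From mathcomp Require Import reals.
Set Implicit Arguments. Unset Strict Implicit. Unset Printing Implicit Defensive.
Import Order.TTheory GRing.Theory Num.Theory.
Local Open Scope ring_scope.

Section Defs.
Variable R : realType.

Definition minner (a b : nat) (X Y : 'M[R]_(a, b)) : R := \tr (X^T *m Y).

Variables (p q m : nat).
Notation Mat := 'M[R]_(p.+1, q).
Notation Vec := 'cV[R]_m.

Definition pnorm (W : Mat) (z : Vec) : R := Num.sqrt (minner W W + minner z z).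

Definition Aop (A : 'I_m -> Mat) (W : Mat) : Vec := \col_i minner (A i) W.

Definition Aadj (A : 'I_m -> Mat) (lam : Vec) : Mat := \sum_i lam i 0 *: A i.

Definition pos0 (z : Vec) : nat := #|[set i | 0 < z i 0]|.

Definition obj (beta : R) (W : Mat) (z : Vec) : R :=
  minner W W / 2 + beta * (pos0 z)%:R.

Definition feasible (A : 'I_m -> Mat) (r : nat) (W : Mat) (z : Vec) : Prop :=
  const_mx 1 + Aop A W = z /\ (\rank W <= r)%N.

Definition local_min (A : 'I_m -> Mat) (beta : R) (r : nat) (W : Mat) (z : Vec) : Prop :=
  feasible A r W z /\
  exists eps : R, 0 < eps /\
    forall (W' : Mat) (z' : Vec), feasible A r W' z' ->
      pnorm (W' - W) (z' - z) < eps -> obj beta W z <= obj beta W' z'.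

(* regular (Frechet) normal cone of F at (W,z), containing (V,u):
   limsup_{(W',z') -> (W,z), (W',z') in F, (W',z') <> (W,z)}
      <(V,u),(W',z')-(W,z)> / ||(W',z')-(W,z)|| <= 0,
   written out in epsilon-delta form. *)
Definition in_normal_cone (A : 'I_m -> Mat) (r : nat) (W : Mat) (z : Vec)
    (V : Mat) (u : Vec) : Prop :=
  forall eps : R, 0 < eps -> exists delta : R, 0 < delta /\
    forall (W' : Mat) (z' : Vec), feasible A r W' z' ->
      0 < pnorm (W' - W) (z' - z) -> pnorm (W' - W) (z' - z) < delta ->
      minner V (W' - W) + minner u (z' - z) <= eps * pnorm (W' - W) (z' - z).

Definition subdiff_pos0 (z d : Vec) : Prop :=
  forall i, (z i 0 != 0 -> d i 0 = 0) /\ (z i 0 = 0 -> 0 <= d i 0).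

(* KKT point: some element (W + A^*(lam), beta d - lam) of the partial
   subdifferential of the Lagrangian has its negative in N_F(W,z). *)
Definition KKT (A : 'I_m -> Mat) (beta : R) (r : nat) (W : Mat) (z : Vec) : Prop :=
  exists lam : Vec, exists d : Vec,
    subdiff_pos0 z d /\
    in_normal_cone A r W z (- (W + Aadj A lam)) (- (beta *: d - lam)) /\
    (\rank W <= r)%N /\ const_mx 1 + Aop A W - z = 0.

Definition lin_indep (a b : nat) (F : 'I_m -> 'M[R]_(a, b)) : Prop :=
  forall c : 'I_m -> R, \sum_i c i *: F i = 0 -> forall i, c i = 0.

Definition inGamma (S : Mat) (k : nat) : bool :=
  [exists i : 'I_p.+1, [exists j : 'I_q,
     [&& (i == k :> nat), (j == k :> nat) & S i j != 0]]].

(* T^i, up to the row/column permutation putting Gamma first: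
   the entries of U^T A_i V outside the (Gamma_p^perp x Gamma_q^perp) block *)
Definition Tmat (U : 'M[R]_p.+1) (V : 'M[R]_q) (S : Mat) (Ai : Mat) : Mat :=
  \matrix_(a, b) if inGamma S a || inGamma S b then (U^T *m Ai *m V) a b else 0.

(* R^i = U^T A_i V_Gamma, with the columns outside Gamma padded by zeros *)
Definition Rmat (U : 'M[R]_p.+1) (V : 'M[R]_q) (S : Mat) (Ai : Mat) : Mat :=
  \matrix_(a, b) if inGamma S b then (U^T *m Ai *m V) a b else 0.

Definition assumption1 (A : 'I_m -> Mat) (r : nat) (W : Mat) : Prop :=
  exists (U : 'M[R]_p.+1) (V : 'M[R]_q) (S : Mat),
    [/\ U^T *m U = 1%:M, V^T *m V = 1%:M, W = U *m S *m V^T,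
        (forall (i : 'I_p.+1) (j : 'I_q), (i : nat) <> j -> S i j = 0) &
        (forall (i : 'I_p.+1) (j : 'I_q), (i : nat) = j -> 0 <= S i j)] /\
    (\rank W = r -> lin_indep (fun i => Tmat U V S (A i))) /\
    ((\rank W < r)%N -> lin_indep (fun i => Rmat U V S (A i))).

End Defs.

(* Curves t |-> (1 + tX) W (1 + tY) + tE with rank E <= r - rank W stay in the rank
   constraint.  If their velocity D decreases every active constraint (z_i = 0), then
   ||z_+||_0 does not increase for small t > 0, so local minimality forces <W, D> >= 0.
   Assumption 1 makes the active A_i independent modulo the orthogonal complement of
   the tangent space {XW + WY}; a Farkas-type argument then gives multipliers mu >= 0,
   supported on the active set, such that W + sum_i mu_i A_i is orthogonal to all these
   velocities.  If rank W < r, rank-one velocities E are allowed, which forces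
   W + sum_i mu_i A_i = 0.  If rank W = r, orthogonality to the tangent space confines
   U^T (W + sum_i mu_i A_i) V to the zero rows and columns of Sigma, and such matrices
   are regular normals to {rank <= r}: a matrix X of rank <= r near Sigma has entries
   of order |X - Sigma|^2 there.  The KKT conditions hold with lambda = 0 and
   d = mu / beta. *)

From HB Require Import structures.
From mathcomp Require Import all_boot all_order all_algebra.
From mathcomp Require Import reals topology normedtype.
From mathcomp Require Import ring lra.
Import Order.TTheory GRing.Theory Num.Theory.
Local Open Scope ring_scope.
Local Open Scope classical_set_scope.
Set Implicit Arguments. Unset Strict Implicit. Unset Printing Implicit Defensive.

(** * The Frobenius inner product *)

Lemma mulmx_delta_entry (R : pzRingType) n1 n2 (W : 'M[R]_(n1, n2)) (a b : 'I_n2) i j :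
  (W *m delta_mx a b) i j = W i a * (j == b)%:R.
Proof.
rewrite mxE (bigD1 a) //= big1 ?addr0; first by rewrite mxE eqxx.
by move=> l la; rewrite mxE (negbTE la) mulr0.
Qed.

Lemma delta_mulmx_entry (R : pzRingType) n1 n2 (W : 'M[R]_(n1, n2)) (a b : 'I_n1) i j :
  (delta_mx a b *m W) i j = (i == a)%:R * W b j.
Proof.
rewrite mxE (bigD1 b) //= big1 ?addr0; first by rewrite mxE eqxx andbT.
by move=> l lb; rewrite mxE (negbTE lb) andbF mul0r.
Qed.

Section Frobenius.
Variables (R : realType) (n1 n2 : nat).
Implicit Types B W X Y Z : 'M[R]_(n1, n2).

Lemma minnerE X Y : minner X Y = \sum_i \sum_j X i j * Y i j.
Proof.
rewrite /minner /mxtrace exchange_big; apply: eq_bigr => j _.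
by rewrite mxE; apply: eq_bigr => i _; rewrite mxE.
Qed.

Lemma minnerC X Y : minner X Y = minner Y X.
Proof. by rewrite /minner -mxtrace_tr trmx_mul trmxK. Qed.

Lemma minnerDr X Y Z : minner X (Y + Z) = minner X Y + minner X Z.
Proof. by rewrite /minner mulmxDr mxtraceD. Qed.

Lemma minnerZr X (c : R) Y : minner X (c *: Y) = c * minner X Y.
Proof. by rewrite /minner -scalemxAr mxtraceZ. Qed.

Lemma minnerNr X Y : minner X (- Y) = - minner X Y.
Proof. by rewrite -scaleN1r minnerZr mulN1r. Qed.

Lemma minnerBr X Y Z : minner X (Y - Z) = minner X Y - minner X Z.
Proof. by rewrite minnerDr minnerNr. Qed.

Lemma minner_sumr (I : finType) X (F : I -> 'M[R]_(n1, n2)) :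
  minner X (\sum_i F i) = \sum_i minner X (F i).
Proof. by rewrite /minner mulmx_sumr raddf_sum. Qed.

Lemma minnerDl X Y Z : minner (Y + Z) X = minner Y X + minner Z X.
Proof. by rewrite minnerC minnerDr !(minnerC X). Qed.

Lemma minnerZl X (c : R) Y : minner (c *: Y) X = c * minner Y X.
Proof. by rewrite minnerC minnerZr minnerC. Qed.

Lemma minnerNl X Y : minner (- Y) X = - minner Y X.
Proof. by rewrite minnerC minnerNr minnerC. Qed.

Lemma minner_suml (I : finType) X (F : I -> 'M[R]_(n1, n2)) :
  minner (\sum_i F i) X = \sum_i minner (F i) X.
Proof. by rewrite minnerC minner_sumr; apply: eq_bigr => i _; rewrite minnerC. Qed.

Lemma minner0l X : minner 0 X = 0.
Proof. by rewrite /minner trmx0 mul0mx mxtrace0. Qed.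

Lemma minner_ge0 X : 0 <= minner X X.
Proof.
by rewrite minnerE; apply: sumr_ge0 => i _; apply: sumr_ge0 => j _; rewrite -expr2 sqr_ge0.
Qed.

Lemma minner_addZ (M N : 'M[R]_(n1, n2)) (t : R) :
  minner (M + t *: N) (M + t *: N) = minner M M + t * (2 * minner M N + t * minner N N).
Proof.
rewrite !minnerDl !minnerDr !minnerZl !minnerZr (minnerC N M); ring.
Qed.

Lemma minner_delta B a b : minner B (delta_mx a b) = B a b.
Proof.
rewrite minnerE (bigD1 a) //= [X in _ + X]big1 ?addr0 => [|i ia].
  rewrite (bigD1 b) //= [X in _ + X]big1 ?addr0 => [|j jb]; first by rewrite mxE !eqxx mulr1.
  by rewrite mxE (negbTE jb) andbF mulr0.
by apply: big1 => j _; rewrite mxE (negbTE ia) mulr0.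
Qed.

Lemma minner_delta_mulmx B W (a b : 'I_n1) :
  minner B (delta_mx a b *m W) = (B *m W^T) a b.
Proof.
rewrite minnerE (bigD1 a) //= [X in _ + X]big1 ?addr0 => [|i ia].
  by rewrite mxE; apply: eq_bigr => j _; rewrite delta_mulmx_entry eqxx mul1r mxE.
by apply: big1 => j _; rewrite delta_mulmx_entry (negbTE ia) mul0r mulr0.
Qed.

Lemma minner_mulmx_delta B W (a b : 'I_n2) :
  minner B (W *m delta_mx a b) = (W^T *m B) a b.
Proof.
rewrite minnerE mxE; apply: eq_bigr => i _; rewrite (bigD1 b) //= big1 ?addr0 => [|j jb].
  by rewrite mulmx_delta_entry eqxx mulr1 mxE mulrC.
by rewrite mulmx_delta_entry (negbTE jb) !mulr0.
Qed.

Lemma minner_conj (U : 'M[R]_n1) (V : 'M[R]_n2) (M N : 'M[R]_(n1, n2)) :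
  U *m U^T = 1%:M -> V *m V^T = 1%:M ->
  minner (U^T *m M *m V) (U^T *m N *m V) = minner M N.
Proof.
move=> UU VV; rewrite /minner !trmx_mul !trmxK !mulmxA -(mulmxA _ U U^T) UU mulmx1.
by rewrite mxtrace_mulC !mulmxA VV mul1mx.
Qed.

End Frobenius.

Lemma normr_addr_mulr_le (R : realDomainType) (c d t : R) :
  0 < t -> t < 1 -> `|c + t * d| <= `|c| + `|d|.
Proof.
move=> t_gt0 t_lt1; rewrite (le_trans (ler_normD _ _)) // lerD2l normrM gtr0_norm //.
by rewrite ler_piMl // ltW.
Qed.

Lemma minner_addZ_le (R : realType) n1 n2 (M N : 'M[R]_(n1, n2)) (t : R) :
  0 < t -> t < 1 ->
  minner (M + t *: N) (M + t *: N) <= `|minner M M| + (`|2 * minner M N| + `|minner N N|).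
Proof.
move=> t_gt0 t_lt1; rewrite minner_addZ (le_trans (ler_norm _)) //.
rewrite (le_trans (normr_addr_mulr_le _ _ t_gt0 t_lt1)) // lerD2l.
exact: normr_addr_mulr_le.
Qed.

Definition fnorm (R : realType) n1 n2 (X : 'M[R]_(n1, n2)) : R := Num.sqrt (minner X X).

Lemma fnorm_le_pnorm (R : realType) p q m (X : 'M[R]_(p.+1, q)) (y : 'cV[R]_m) :
  fnorm X <= pnorm X y.
Proof. by rewrite ler_sqrt ?lerDl ?minner_ge0 // addr_ge0 ?minner_ge0. Qed.

Section AopLinear.
Variables (R : realType) (p q m : nat) (A : 'I_m -> 'M[R]_(p.+1, q)).

Lemma AopD X Y : Aop A (X + Y) = Aop A X + Aop A Y.
Proof. by apply/matrixP => i j; rewrite !mxE minnerDr. Qed.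

Lemma AopZ (c : R) X : Aop A (c *: X) = c *: Aop A X.
Proof. by apply/matrixP => i j; rewrite !mxE minnerZr. Qed.

Lemma AopB X Y : Aop A (X - Y) = Aop A X - Aop A Y.
Proof. by apply/matrixP => i j; rewrite !mxE minnerBr. Qed.

Lemma minner_Aadj (lam : 'cV[R]_m) X :
  minner (Aadj A lam) X = minner lam (Aop A X).
Proof.
rewrite /Aadj minner_suml minnerE; apply: eq_bigr => i _.
by rewrite big_ord1 minnerZl !mxE.
Qed.

End AopLinear.

Lemma pos0_le (R : realType) m (z z' : 'cV[R]_m) :
  (forall i, z i 0 <= 0 -> z' i 0 <= 0) -> (pos0 z' <= pos0 z)%N.
Proof.
move=> nonpos; apply: subset_leq_card; apply/subsetP => i; rewrite !inE.
by apply: contraTT; rewrite -!leNgt; exact: nonpos.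
Qed.

Lemma near0_addr_lt0 (R : realFieldType) (a K : R) (g : R -> R) :
  a < 0 -> (forall t, 0 < t -> t < 1 -> g t <= K) ->
  \forall t \near 0^'+, a + t * g t < 0.
Proof.
move=> a_lt0 g_le; have K1 : 0 < `|K| + 1 by rewrite ltr_wpDl.
near=> t.
have t_gt0 : 0 < t by near: t; exact: nbhs_right_gt.
have t_lt1 : t < 1 by near: t; exact: nbhs_right_lt.
have t_small : t * (`|K| + 1) < - a.
  by rewrite -ltr_pdivlMr //; near: t; apply: nbhs_right_lt; rewrite divr_gt0 ?oppr_gt0.
have : g t <= `|K| + 1.
  by rewrite (le_trans (g_le t t_gt0 t_lt1)) // (le_trans (ler_norm K)) ?lerDl.
move/(ler_wpM2l (ltW t_gt0)); lra.
Unshelve. all: by end_near.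
Qed.

Lemma ge0_of_addr_mulr_ge0 (R : realFieldType) (a b : R) :
  (forall e, 0 < e -> 0 <= a + e * b) -> 0 <= a.
Proof.
move=> ge0; rewrite leNgt; apply/negP => a_lt0.
have near_lt0 := near0_addr_lt0 (g := fun=> b) a_lt0 (fun _ _ _ => lexx b).
have : \forall e \near 0^'+, 0 < e /\ a + e * b < 0.
  by near=> e; split; near: e; [exact: nbhs_right_gt | exact: near_lt0].
case/(filter_ex (FF := at_right_proper_filter 0)) => e [e_gt0].
by rewrite ltNge ge0.
Unshelve. all: by end_near.
Qed.

(** * First-order condition at a local minimizer *)

Lemma mxrank_mulmx2_le (F : fieldType) n1 n2 (P : 'M[F]_n1) (Q : 'M[F]_n2)
    (X : 'M[F]_(n1, n2)) :
  (\rank (P *m X *m Q) <= \rank X)%N.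
Proof. exact: leq_trans (mxrankM_maxl _ _) (mxrankM_maxr _ _). Qed.

Lemma mxrank_mulmxD_le (F : fieldType) n1 n2 (P : 'M[F]_n1) (Q : 'M[F]_n2)
    (W E : 'M[F]_(n1, n2)) :
  (\rank (P *m W *m Q + E)%R <= \rank W + \rank E)%N.
Proof.
apply: leq_trans (mxrank_add _ _) _; rewrite leq_add2r; exact: mxrank_mulmx2_le.
Qed.

Section Curve.
Variables (R : realType) (p q m : nat) (A : 'I_m -> 'M[R]_(p.+1, q)).
Variables (W D B : 'M[R]_(p.+1, q)).

Definition quad_curve (t : R) := W + t *: (D + t *: B).

Lemma near0_quad_curve_norm_lt :
  minner W D < 0 ->
  \forall t \near 0^'+, minner (quad_curve t) (quad_curve t) < minner W W.
Proof.
move=> WD_lt0.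
have near_g := near0_addr_lt0
  (K := `|2 * minner W B| + (`|minner D D| + (`|2 * minner D B| + `|minner B B|)))
  (g := fun t => 2 * minner W B + minner (D + t *: B) (D + t *: B)) (_ : 2 * minner W D < 0).
near=> t.
have t_gt0 : 0 < t by near: t; exact: nbhs_right_gt.
have -> : minner (quad_curve t) (quad_curve t) = minner W W
    + t * (2 * minner W D + t * (2 * minner W B + minner (D + t *: B) (D + t *: B))).
  by rewrite /quad_curve minner_addZ minnerDr minnerZr; ring.
rewrite gtrDl pmulr_rlt0 //.
near: t; apply: near_g; first lra.
by move=> t t_gt0 t_lt1; rewrite lerD ?ler_norm ?minner_addZ_le.
Unshelve. all: by end_near.
Qed.

Lemma near0_quad_curve_close (eps : R) : 0 < eps ->
  \forall t \near 0^'+, pnorm (quad_curve t - W) (Aop A (quad_curve t - W)) < eps.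
Proof.
move=> eps_gt0.
pose K := `|minner D D| + (`|2 * minner D B| + `|minner B B|)
  + (`|minner (Aop A D) (Aop A D)| + (`|2 * minner (Aop A D) (Aop A B)|
     + `|minner (Aop A B) (Aop A B)|)).
have K_ge0 : 0 <= K by rewrite /K !addr_ge0.
have near_sq := near0_addr_lt0 (K := K) (_ : - eps ^+ 2 < 0)
  (g := fun t => t * (minner (D + t *: B) (D + t *: B)
                      + minner (Aop A D + t *: Aop A B) (Aop A D + t *: Aop A B))).
near=> t.
have -> : quad_curve t - W = t *: (D + t *: B) by rewrite /quad_curve addrC addKr.
rewrite /pnorm AopZ AopD AopZ -(ger0_norm (ltW eps_gt0)) -sqrtr_sqr.
rewrite ltr_sqrt ?exprn_gt0 //.
rewrite !minnerZl !minnerZr -!mulrDr.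
suff : - eps ^+ 2 + t * (t * (minner (D + t *: B) (D + t *: B)
    + minner (Aop A D + t *: Aop A B) (Aop A D + t *: Aop A B))) < 0 by lra.
near: t; apply: near_sq; first by rewrite oppr_lt0 exprn_gt0.
move=> t t_gt0 t_lt1.
rewrite (le_trans (ler_piMl _ (ltW t_lt1))) ?addr_ge0 ?minner_ge0 //.
by rewrite lerD ?minner_addZ_le.
Unshelve. all: by end_near.
Qed.

Lemma near0_quad_curve_pos0 (z : 'cV[R]_m) :
  const_mx 1 + Aop A W = z -> (forall i, z i 0 = 0 -> minner (A i) D < 0) ->
  \forall t \near 0^'+, (pos0 (const_mx 1%R + Aop A (quad_curve t)) <= pos0 z)%N.
Proof.
move=> Wz descent.
have entry t i : (const_mx 1%R + Aop A (quad_curve t)) i 0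
    = z i 0 + t * (minner (A i) D + t * minner (A i) B).
  by rewrite -Wz !mxE /quad_curve minnerDr !minnerZr minnerDr minnerZr; ring.
have near_i i : \forall t \near 0^'+,
    z i 0 <= 0 -> (const_mx 1%R + Aop A (quad_curve t)) i 0 <= 0.
  case: (ltgtP (z i 0) 0) => [zi_lt0 | zi_gt0 | zi0].
  - have near_g := near0_addr_lt0 (K := `|minner (A i) D| + `|minner (A i) B|)
      (g := fun t => minner (A i) D + t * minner (A i) B) zi_lt0.
    near=> t => _; rewrite entry ltW //; near: t; apply: near_g => t t_gt0 t_lt1.
    by rewrite (le_trans (ler_norm _)) ?normr_addr_mulr_le.
  - by apply: nearW.
  - have near_g := near0_addr_lt0 (K := minner (A i) B) (g := fun=> minner (A i) B)
      (descent i zi0) (fun _ _ _ => lexx _).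
    near=> t => _.
    have t_gt0 : 0 < t by near: t; exact: nbhs_right_gt.
    rewrite entry zi0 add0r pmulr_rle0 // ltW //; near: t; exact: near_g.
have near_all := filter_forall _ near_i.
near=> t; apply: pos0_le; near: t; exact: near_all.
Unshelve. all: by end_near.
Qed.

End Curve.

(* (1 + tX) W (1 + tY) + tE has rank at most rank W + k and velocity D at t = 0. *)
Definition rank_dir (R : realType) n1 n2 (W : 'M[R]_(n1, n2)) (k : nat)
    (D : 'M[R]_(n1, n2)) : Prop :=
  exists (X : 'M[R]_n1) (Y : 'M[R]_n2) (E : 'M[R]_(n1, n2)),
    (\rank E <= k)%N /\ D = X *m W + W *m Y + E.

Lemma local_min_first_order (R : realType) p q m r (beta : R)
    (A : 'I_m -> 'M[R]_(p.+1, q)) W z D :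
  0 <= beta -> local_min A beta r W z -> rank_dir W (r - \rank W) D ->
  (forall i, z i 0 = 0 -> minner (A i) D < 0) -> 0 <= minner W D.
Proof.
move=> beta_ge0 [[Wz rkW] [eps [eps_gt0 W_min]]] [X [Y [E [rkE D_def]]]] descent.
rewrite leNgt; apply/negP => WD_lt0.
pose B := X *m W *m Y; pose Wt := quad_curve W D B.
pose zt t := const_mx 1 + Aop A (Wt t).
have feas t : feasible A r (Wt t) (zt t).
  split=> //.
  have -> : Wt t = (1%:M + t *: X) *m W *m (1%:M + t *: Y) + t *: E.
    rewrite /Wt /quad_curve D_def /B !mulmxDl !mulmxDr !mul1mx !mulmx1.
    rewrite -!scalemxAl -!scalemxAr !scalerDr !scalerA -mulmxA.
    by apply/matrixP => i j; rewrite !mxE; ring.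
  apply: leq_trans (mxrank_mulmxD_le _ _ _ _) _.
  rewrite -(subnKC rkW) leq_add2l; exact: leq_trans (mxrank_scale _ _) rkE.
have : \forall t \near 0^'+,
    pnorm (Wt t - W) (Aop A (Wt t - W)) < eps /\ obj beta (Wt t) (zt t) < obj beta W z.
  near=> t; split; first by near: t; exact: near0_quad_curve_close.
  have fewer_pos : (pos0 (zt t) <= pos0 z)%N by near: t; exact: near0_quad_curve_pos0.
  have norm_lt : minner (Wt t) (Wt t) < minner W W.
    by near: t; exact: near0_quad_curve_norm_lt.
  have : beta * (pos0 (zt t))%:R <= beta * (pos0 z)%:R by rewrite ler_wpM2l ?ler_nat.
  rewrite /obj; lra.
case/(filter_ex (FF := at_right_proper_filter 0)) => t [close better].
have zt_sub : zt t - z = Aop A (Wt t - W).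
  by rewrite -Wz /zt opprD addrACA subrr add0r AopB.
by have := W_min _ _ (feas t); rewrite zt_sub leNgt better => /(_ close).
Unshelve. all: by end_near.
Qed.

(** * Lagrange multipliers *)

Section Span.
Variables (R : realType) (n1 n2 m : nat) (T : finType).
Variables (h : T -> 'M[R]_(n1, n2)) (g : 'I_m -> 'M[R]_(n1, n2)) (I0 : pred 'I_m).

Definition spanned (F : 'M[R]_(n1, n2)) : Prop :=
  exists x : T -> R, F = \sum_t x t *: h t.

Lemma spanned0 : spanned 0.
Proof. by exists (fun=> 0); rewrite big1 // => t _; rewrite scale0r. Qed.

Lemma spannedD F1 F2 : spanned F1 -> spanned F2 -> spanned (F1 + F2).
Proof.
move=> [x1 ->] [x2 ->]; exists (fun t => x1 t + x2 t).
by rewrite -big_split; apply: eq_bigr => t _; rewrite scalerDl.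
Qed.

Lemma spannedZ (c : R) F : spanned F -> spanned (c *: F).
Proof.
move=> [x ->]; exists (fun t => c * x t).
by rewrite scaler_sumr; apply: eq_bigr => t _; rewrite scalerA.
Qed.

Lemma spanned_sum (I : finType) (F : I -> 'M[R]_(n1, n2)) :
  (forall i, spanned (F i)) -> spanned (\sum_i F i).
Proof. by move=> spF; apply: (big_ind spanned spanned0 spannedD). Qed.

Definition free_on_span : Prop :=
  forall c : 'I_m -> R, (forall i, ~~ I0 i -> c i = 0) ->
    (forall t, minner (\sum_i c i *: g i) (h t) = 0) -> forall i, c i = 0.

Definition span_gram : 'M[R]_(#|T|, m) :=
  \matrix_(k, i) (if I0 i then minner (g i) (h (enum_val k)) else 0).

Definition active_row (alpha : 'I_m -> R) : 'rV[R]_m :=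
  \row_i (if I0 i then alpha i else 0).

(* The coefficients solve [x *m span_gram = active_row alpha]. *)
Definition span_sol (alpha : 'I_m -> R) : 'M[R]_(n1, n2) :=
  \sum_t (active_row alpha *m pinvmx span_gram) 0 (enum_rank t) *: h t.

Lemma span_sol_spanned alpha : spanned (span_sol alpha).
Proof. by eexists. Qed.

Hypothesis free : free_on_span.

Lemma active_row_sub alpha : (active_row alpha <= span_gram)%MS.
Proof.
(* Otherwise a column of [cokermx span_gram] not annihilating [active_row alpha]
   provides coefficients contradicting [free]. *)
apply/negPn/negP; rewrite submxE => /eqP Ccoker.
set C := cokermx span_gram in Ccoker.
have [j Cj] : exists j, (active_row alpha *m C) 0 j != 0.
  apply/existsP; apply: contra_notT Ccoker => /existsPn C0.
  by apply/matrixP => i k; rewrite [i]ord1 [RHS]mxE; apply/eqP/negPn; exact: C0.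
pose c i := if I0 i then C i j else 0.
have c0 : forall i, c i = 0.
  apply: free => [i /negbTE Ii|t]; first by rewrite /c Ii.
  have := congr1 (fun M : 'M[R]_(#|T|, m) => M (enum_rank t) j) (mulmx_coker span_gram).
  rewrite /= [RHS]mxE mxE => <-; rewrite minner_suml; apply: eq_bigr => i _.
  by rewrite minnerZl mxE enum_rankK /c; case: (I0 i); rewrite ?mul0r // mulrC.
move: Cj; rewrite mxE big1 ?eqxx // => i _.
by have := c0 i; rewrite mxE /c; case: (I0 i) => [->|_]; rewrite ?mulr0 ?mul0r.
Qed.

Lemma minner_span_sol alpha i : I0 i -> minner (g i) (span_sol alpha) = alpha i.
Proof.
move=> Ii; have av_i : active_row alpha 0 i = alpha i by rewrite mxE Ii.
have := congr1 (fun M : 'rV[R]_m => M 0 i) (mulmxKpV (active_row_sub alpha)).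
rewrite /= av_i => <-; rewrite minner_sumr mxE.
rewrite (reindex (@enum_val T (mem T))) /=; last first.
  by exists enum_rank => [t _|k _]; [exact: enum_valK | exact: enum_rankK].
have gram_i k : span_gram k i = minner (g i) (h (enum_val k)) by rewrite mxE Ii.
by apply: eq_bigr => k _; rewrite minnerZr enum_valK gram_i.
Qed.

End Span.

Section Multiplier.
Variables (R : realType) (n1 n2 m : nat) (T : finType).
Variables (h : T -> 'M[R]_(n1, n2)) (g : 'I_m -> 'M[R]_(n1, n2)) (I0 : pred 'I_m).
Variables (w : 'M[R]_(n1, n2)) (K : 'M[R]_(n1, n2) -> Prop).
Hypothesis free : free_on_span h g I0.
Hypothesis K0 : K 0.
Hypothesis K_opp : forall d, K d -> K (- d).
Hypothesis K_add_span : forall F d, spanned h F -> K d -> K (F + d).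
Hypothesis K_first_order :
  forall d, K d -> (forall i, I0 i -> minner (g i) d < 0) -> 0 <= minner w d.

Let sol := span_sol h g I0.
Let sol_unit j := sol (fun i => - (i == j)%:R).

Lemma K_span F : spanned h F -> K F.
Proof. by move=> spF; rewrite -[F]addr0; exact: K_add_span. Qed.

Lemma K_first_order_le d :
  K d -> (forall i, I0 i -> minner (g i) d <= 0) -> 0 <= minner w d.
Proof.
(* Perturb d by e times a direction decreasing every active g_i, and let e -> 0. *)
move=> Kd d_le0.
apply: (@ge0_of_addr_mulr_ge0 _ _ (minner w (sol (fun=> -1)))) => e e_gt0.
rewrite -minnerZr -minnerDr addrC; apply: K_first_order.
  by apply: K_add_span => //; apply: spannedZ; exact: span_sol_spanned.
by move=> i Ii; rewrite minnerDr minnerZr minner_span_sol //; have := d_le0 i Ii; lra.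
Qed.

Lemma K_orth_active d :
  K d -> (forall i, I0 i -> minner (g i) d = 0) -> minner w d = 0.
Proof.
move=> Kd d0; apply/eqP; rewrite eq_le; apply/andP; split.
  rewrite -oppr_ge0 -minnerNr; apply: K_first_order_le (K_opp Kd) _ => i Ii.
  by rewrite minnerNr (d0 i Ii) oppr0.
by apply: K_first_order_le Kd _ => i Ii; rewrite (d0 i Ii).
Qed.

(* [sol_unit j] decreases [g j] at unit rate and fixes the other active [g i]. *)
Definition multiplier j := if I0 j then minner w (sol_unit j) else 0.

Lemma multiplier_ge0 j : 0 <= multiplier j.
Proof.
rewrite /multiplier; case: ifP => // Ij.
apply: K_first_order_le; first by apply: K_span; exact: span_sol_spanned.
by move=> i Ii; rewrite minner_span_sol // oppr_le0 ler0n.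
Qed.

Lemma multiplier_inactive j : ~~ I0 j -> multiplier j = 0.
Proof. by rewrite /multiplier => /negbTE ->. Qed.

Lemma multiplier_orth d : K d -> minner (w + \sum_j multiplier j *: g j) d = 0.
Proof.
move=> Kd; pose beta j := if I0 j then minner (g j) d else 0.
have KG : K (\sum_j beta j *: sol_unit j + d).
  apply: K_add_span Kd; apply: spanned_sum => j.
  by apply: spannedZ; exact: span_sol_spanned.
have G_orth i : I0 i -> minner (g i) (\sum_j beta j *: sol_unit j + d) = 0.
  move=> Ii; rewrite minnerDr minner_sumr (bigD1 i) //= big1 => [|j ji].
    by rewrite minnerZr minner_span_sol // eqxx mulrN1 /beta Ii addr0 addNr.
  by rewrite minnerZr minner_span_sol // eq_sym (negbTE ji) oppr0 mulr0.
have := K_orth_active KG G_orth; rewrite minnerDr minner_sumr minnerDl minner_suml.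
move=> orth; rewrite -[RHS]orth [RHS]addrC; congr (_ + _); apply: eq_bigr => j _.
by rewrite minnerZr minnerZl /beta /multiplier; case: (I0 j); rewrite ?mul0r // mulrC.
Qed.

End Multiplier.

Lemma lagrange_multiplier (R : realType) n1 n2 m (T : finType)
    (h : T -> 'M[R]_(n1, n2)) (g : 'I_m -> 'M[R]_(n1, n2)) (I0 : pred 'I_m)
    (w : 'M[R]_(n1, n2)) (K : 'M[R]_(n1, n2) -> Prop) :
  free_on_span h g I0 -> K 0 -> (forall d, K d -> K (- d)) ->
  (forall F d, spanned h F -> K d -> K (F + d)) ->
  (forall d, K d -> (forall i, I0 i -> minner (g i) d < 0) -> 0 <= minner w d) ->
  exists mu : 'I_m -> R, [/\ forall i, 0 <= mu i, forall i, ~~ I0 i -> mu i = 0 &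
    forall d, K d -> minner (w + \sum_i mu i *: g i) d = 0].
Proof.
move=> free K0 K_opp K_add K_fo; exists (multiplier h g I0 w); split.
- exact: multiplier_ge0 free K0 K_add K_fo.
- exact: multiplier_inactive.
- exact: multiplier_orth free K_opp K_add K_fo.
Qed.

Section TangentSpace.
Variables (R : realType) (n1 n2 : nat) (W : 'M[R]_(n1, n2)).

Definition tangent_gen (t : ('I_n1 * 'I_n1) + ('I_n2 * 'I_n2)) : 'M[R]_(n1, n2) :=
  match t with
  | inl ab => delta_mx ab.1 ab.2 *m W
  | inr ab => W *m delta_mx ab.1 ab.2
  end.

Lemma spanned_tangent_gen F :
  spanned tangent_gen F -> exists (X : 'M[R]_n1) (Y : 'M[R]_n2), F = X *m W + W *m Y.
Proof.
move=> [x ->]; rewrite big_sumType /=.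
exists (\sum_ab x (inl ab) *: delta_mx ab.1 ab.2).
exists (\sum_ab x (inr ab) *: delta_mx ab.1 ab.2).
rewrite mulmx_suml mulmx_sumr; congr (_ + _); apply: eq_bigr => ab _.
  by rewrite scalemxAl.
by rewrite scalemxAr.
Qed.

Lemma tangent_gen_orth (B : 'M[R]_(n1, n2)) :
  (forall t, minner B (tangent_gen t) = 0) -> B *m W^T = 0 /\ W^T *m B = 0.
Proof.
move=> orth; split; apply/matrixP => a b; rewrite [RHS]mxE.
  by rewrite -minner_delta_mulmx; exact: (orth (inl (a, b))).
by rewrite -minner_mulmx_delta; exact: (orth (inr (a, b))).
Qed.

Variable k : nat.

Lemma rank_dir0 : rank_dir W k 0.
Proof. by exists 0, 0, 0; rewrite mxrank0 mul0mx mulmx0 !addr0. Qed.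

Lemma rank_dir_opp D : rank_dir W k D -> rank_dir W k (- D).
Proof.
move=> [X [Y [E [rkE ->]]]]; exists (- X), (- Y), (- E); rewrite mxrank_opp rkE.
by rewrite mulNmx mulmxN !opprD.
Qed.

Lemma rank_dir_add_span F D :
  spanned tangent_gen F -> rank_dir W k D -> rank_dir W k (F + D).
Proof.
move=> /spanned_tangent_gen [X' [Y' ->]] [X [Y [E [rkE ->]]]].
exists (X' + X), (Y' + Y), E; split=> //.
by rewrite mulmxDl mulmxDr; apply/matrixP => i j; rewrite !mxE; ring.
Qed.

Lemma rank_dir_tangent_gen t : rank_dir W k (tangent_gen t).
Proof.
case: t => ab.
  by exists (delta_mx ab.1 ab.2), 0, 0; rewrite mxrank0 mulmx0 !addr0.
by exists 0, (delta_mx ab.1 ab.2), 0; rewrite mxrank0 mul0mx add0r addr0.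
Qed.

Lemma rank_dir_delta a b : (0 < k)%N -> rank_dir W k (delta_mx a b).
Proof. by exists 0, 0, (delta_mx a b); rewrite mxrank_delta mul0mx mulmx0 !add0r. Qed.

End TangentSpace.

(** * Regular normals to the set of matrices of rank at most r *)

Definition rank_le_normal (R : realType) n1 n2 (r : nat) (W V : 'M[R]_(n1, n2)) : Prop :=
  forall eps, 0 < eps -> exists2 delta, 0 < delta &
    forall W' : 'M[R]_(n1, n2), (\rank W' <= r)%N -> fnorm (W' - W) < delta ->
      minner V (W' - W) <= eps * fnorm (W' - W).

Lemma rank_le_normal0 (R : realType) n1 n2 (r : nat) (W : 'M[R]_(n1, n2)) :
  rank_le_normal r W 0.
Proof.
move=> eps eps_gt0; exists 1 => // W' _ _.
by rewrite minner0l mulr_ge0 ?sqrtr_ge0 // ltW.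
Qed.

Lemma cauchy_schwarz (R : realFieldType) (I : finType) (P : pred I) (x y : I -> R) :
  (\sum_(i | P i) x i * y i) ^+ 2 <= (\sum_(i | P i) x i ^+ 2) * \sum_(i | P i) y i ^+ 2.
Proof.
set A := \sum_(i | P i) x i ^+ 2; set B := \sum_(i | P i) y i ^+ 2.
set C := \sum_(i | P i) x i * y i.
have A_ge0 : 0 <= A by rewrite sumr_ge0 // => i _; rewrite sqr_ge0.
have B_ge0 : 0 <= B by rewrite sumr_ge0 // => i _; rewrite sqr_ge0.
have : 0 <= \sum_(i | P i) (A * y i - C * x i) ^+ 2.
  by rewrite sumr_ge0 // => i _; rewrite sqr_ge0.
have -> : \sum_(i | P i) (A * y i - C * x i) ^+ 2 = A * (A * B - C ^+ 2).
  rewrite (eq_bigr (fun i => A ^+ 2 * y i ^+ 2 + (- (2 * A * C)) * (x i * y i)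
                              + C ^+ 2 * x i ^+ 2)); last by move=> i _; ring.
  by rewrite !big_split /= -!mulr_sumr -/A -/B -/C; ring.
case: (ltrgt0P A) => [A_gt0 | A_lt0 | A0]; [nra | lra | move=> _].
have x0 i : P i -> x i = 0.
  move=> Pi; apply/eqP; rewrite -sqrf_eq0; apply/eqP.
  exact: (psumr_eq0P (fun i _ => sqr_ge0 (x i)) A0).
have -> : C = 0 by rewrite /C big1 // => i Pi; rewrite x0 ?mul0r.
by rewrite expr0n /= mulr_ge0.
Qed.

Lemma sqr_mulr_le_off (R : realFieldType) n (x y : 'I_n -> R) b :
  \sum_k x k * y k = 0 ->
  (x b * y b) ^+ 2 <= (\sum_(k | k != b) x k ^+ 2) * \sum_(k | k != b) y k ^+ 2.
Proof.
move=> xy0; rewrite (bigD1 b) //= in xy0.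
have -> : x b * y b = - \sum_(k | k != b) x k * y k by apply/eqP; rewrite -addr_eq0 xy0.
by rewrite sqrrN cauchy_schwarz.
Qed.

Lemma sum_sqr_mulmx_le (R : realType) n1 n2 (E : 'M[R]_(n1, n2)) (v : 'I_n2 -> R) :
  \sum_i (\sum_k E i k * v k) ^+ 2 <= minner E E * \sum_k v k ^+ 2.
Proof.
rewrite minnerE mulr_suml; apply: ler_sum => i _.
under [X in _ <= X * _]eq_bigr do rewrite -expr2.
exact: cauchy_schwarz.
Qed.

Lemma sum_sqr_row_le (R : realType) n1 n2 (E : 'M[R]_(n1, n2)) a :
  \sum_k E a k ^+ 2 <= minner E E.
Proof.
rewrite minnerE (bigD1 a) //= (eq_bigr (fun k => E a k ^+ 2)) => [|k _]; last first.
  by rewrite expr2.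
by rewrite lerDl sumr_ge0 // => i _; apply: sumr_ge0 => k _; rewrite -expr2 sqr_ge0.
Qed.

Lemma sum_sqr_single (R : realFieldType) (I : finType) (f : I -> R) :
  (forall j k, j != k -> f j * f k = 0) -> (\sum_i f i) ^+ 2 = \sum_i f i ^+ 2.
Proof.
move=> f_single; rewrite expr2 mulr_suml; apply: eq_bigr => j _.
rewrite mulr_sumr (bigD1 j) //= big1 ?addr0 ?expr2 // => k kj.
by apply: f_single; rewrite eq_sym.
Qed.

Lemma kernel_vector_supp (F : fieldType) n1 n2 (X : 'M[F]_(n1, n2)) (J : {set 'I_n2}) :
  (\rank X < #|J|)%N -> exists2 u : 'cV[F]_n2, u != 0 &
    (forall k, k \notin J -> u k 0 = 0) /\ X *m u = 0.
Proof.
move=> rkX; pose P : 'M[F]_(#|J|, n2) := \matrix_(i, k) (k == enum_val i)%:R.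
have vP (v : 'rV_#|J|) k : (v *m P) 0 k = \sum_i v 0 i * (k == enum_val i)%:R.
  by rewrite mxE; apply: eq_bigr => i _; rewrite mxE.
have : kermx (X *m P^T)^T != 0.
  rewrite -mxrank_eq0 mxrank_ker mxrank_tr subn_eq0 -ltnNge.
  exact: leq_ltn_trans (mxrankM_maxl _ _) rkX.
case/rowV0Pn => v /sub_kermxP vK v_neq0.
have [l vl] : exists l, v 0 l != 0.
  apply/existsP; apply: contraNT v_neq0 => /existsPn v0.
  by apply/eqP/rowP => l; rewrite mxE; apply/eqP/negPn; exact: v0.
have vPl : (v *m P) 0 (enum_val l) = v 0 l.
  rewrite vP (bigD1 l) //= eqxx mulr1 big1 ?addr0 // => i il.
  by rewrite (inj_eq enum_val_inj) eq_sym (negbTE il) mulr0.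
exists (v *m P)^T; last split.
- apply: contraNneq vl => /(congr1 trmx); rewrite trmxK trmx0 => /rowP/(_ (enum_val l)).
  by rewrite vPl mxE => ->.
- move=> k kJ; rewrite mxE vP big1 // => i _.
  by case: eqP => [kE|]; [move: kJ; rewrite kE enum_valP | rewrite mulr0].
- have -> : X *m (v *m P)^T = (v *m (X *m P^T)^T)^T by rewrite !trmx_mul !trmxK mulmxA.
  by rewrite vK trmx0.
Qed.

Lemma entry_bound_arith (R : realFieldType) (s n x ug ub : R) :
  0 < s -> 0 <= n -> n <= s / 2 -> 0 <= ug -> 0 <= ub -> 0 < ug + ub ->
  s * ug <= n * (ug + ub) -> x ^+ 2 * ub <= n * ug -> x ^+ 2 * s <= 2 * n ^+ 2.
Proof.
move=> s_gt0 n_ge0 n_small ug_ge0 ub_ge0 u_gt0 col row.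
have ug_le : ug <= ub.
  have : s * ug <= s * ub by nra.
  by rewrite ler_pM2l.
have ub_gt0 : 0 < ub by lra.
have : x ^+ 2 * s * ub <= 2 * n ^+ 2 * ub by nra.
by rewrite ler_pM2r.
Qed.

Lemma mxrank_sum_le (F : fieldType) n1 n2 (I : finType) (P : pred I)
    (A : I -> 'M[F]_(n1, n2)) :
  (\rank (\sum_(i | P i) A i)%R <= \sum_(i | P i) \rank (A i))%N.
Proof.
apply: (big_ind2 (fun M k => \rank M <= k)%N); first by rewrite mxrank0.
  by move=> M1 k1 M2 k2 h1 h2; apply: leq_trans (mxrank_add _ _) (leq_add h1 h2).
by [].
Qed.

Definition nz_cols (R : nmodType) n1 n2 (S : 'M[R]_(n1, n2)) : {set 'I_n2} :=
  [set k | [exists a, S a k != 0]].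

Definition nz_rows (R : nmodType) n1 n2 (S : 'M[R]_(n1, n2)) : {set 'I_n1} :=
  [set a | [exists k, S a k != 0]].

Lemma nz_colsPn (R : nmodType) n1 n2 (S : 'M[R]_(n1, n2)) a k :
  k \notin nz_cols S -> S a k = 0.
Proof. by rewrite inE => /existsPn /(_ a) /negPn /eqP. Qed.

Lemma nz_rowsPn (R : nmodType) n1 n2 (S : 'M[R]_(n1, n2)) a k :
  a \notin nz_rows S -> S a k = 0.
Proof. by rewrite inE => /existsPn /(_ k) /negPn /eqP. Qed.

Lemma col_sqr_lbound (R : realFieldType) n1 n2 (S : 'M[R]_(n1, n2)) :
  exists2 s, 0 < s & forall k, k \in nz_cols S -> s <= \sum_a S a k ^+ 2.
Proof.
pose c k := \sum_a S a k ^+ 2.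
have c_gt0 k : k \in nz_cols S -> 0 < c k.
  rewrite inE => /existsP [a Sak]; rewrite /c (bigD1 a) //= ltr_wpDr ?sumr_ge0 //.
    by move=> i _; rewrite sqr_ge0.
  by rewrite lt_def sqrf_eq0 Sak sqr_ge0.
have inv_ge0 k : k \in nz_cols S -> 0 <= (c k)^-1 by move/c_gt0; rewrite invr_ge0 => /ltW.
have sum_ge0 : 0 <= \sum_(k in nz_cols S) (c k)^-1 by exact: sumr_ge0.
exists (1 + \sum_(k in nz_cols S) (c k)^-1)^-1 => [|k kS].
  by rewrite invr_gt0 ltr_wpDr.
rewrite -/(c k) -[c k]invrK lef_pV2 ?posrE ?invr_gt0 ?ltr_wpDr ?c_gt0 //.
by rewrite (bigD1 k) //= addrCA lerDl addr_ge0 // sumr_ge0 // => j /andP[/inv_ge0].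
Qed.

Lemma mxrank_le_nz_cols (F : fieldType) n1 n2 (S : 'M[F]_(n1, n2)) :
  (\rank S <= #|nz_cols S|)%N.
Proof.
have S_sum : S = \sum_(k in nz_cols S) S *m delta_mx k k.
  apply/matrixP => a j; rewrite summxE.
  under eq_bigr do rewrite mulmx_delta_entry.
  have [jS|jS] := boolP (j \in nz_cols S).
    rewrite (bigD1 j) //= eqxx mulr1 big1 ?addr0 // => k /andP[_ kj].
    by rewrite eq_sym (negbTE kj) mulr0.
  rewrite (nz_colsPn _ jS) big1 // => k kS.
  by case: eqP => [jk|_]; [move: jS; rewrite jk kS | rewrite mulr0].
rewrite [X in (\rank X <= _)%N]S_sum; apply: leq_trans (mxrank_sum_le _ _) _.
rewrite -sum1_card; apply: leq_sum => k _.
by rewrite (leq_trans (mxrankM_maxr _ _)) ?mxrank_delta.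
Qed.

Section DiagonalZeros.
Variables (R : fieldType) (n1 n2 : nat) (S : 'M[R]_(n1, n2)).
Hypothesis S_diag : forall (i : 'I_n1) (j : 'I_n2), (i : nat) <> j -> S i j = 0.

Lemma diag_nz_eq i j : S i j != 0 -> (i : nat) = j.
Proof. by move=> Sij; apply/eqP; apply: contraNT Sij => /eqP ne; rewrite S_diag ?eqxx. Qed.

Lemma mulmx_trC_eq0_nz_cols (B : 'M[R]_(n1, n2)) :
  B *m S^T = 0 -> forall a b, b \in nz_cols S -> B a b = 0.
Proof.
move=> BS a b; rewrite inE => /existsP [c Scb].
move/matrixP: BS => /(_ a c); rewrite !mxE (bigD1 b) //= big1 ?addr0 => [|k kb].
  by rewrite mxE => /eqP; rewrite mulf_eq0 (negbTE Scb) orbF => /eqP.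
rewrite mxE; have [->|Sck] := eqVneq (S c k) 0; first by rewrite mulr0.
by move: kb; rewrite -val_eqE /= -(diag_nz_eq Sck) (diag_nz_eq Scb) eqxx.
Qed.

Lemma trC_mulmx_eq0_nz_rows (B : 'M[R]_(n1, n2)) :
  S^T *m B = 0 -> forall a b, a \in nz_rows S -> B a b = 0.
Proof.
move=> SB a b; rewrite inE => /existsP [c Sac].
move/matrixP: SB => /(_ c b); rewrite !mxE (bigD1 a) //= big1 ?addr0 => [|i ia].
  by rewrite mxE => /eqP; rewrite mulf_eq0 (negbTE Sac) /= => /eqP.
rewrite mxE; have [->|Sic] := eqVneq (S i c) 0; first by rewrite mul0r.
by move: ia; rewrite -val_eqE /= (diag_nz_eq Sic) -(diag_nz_eq Sac) eqxx.
Qed.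

End DiagonalZeros.

Section DiagonalNormalCone.
Variables (R : realType) (n1 n2 : nat) (S : 'M[R]_(n1, n2)).
Hypothesis S_diag : forall (i : 'I_n1) (j : 'I_n2), (i : nat) <> j -> S i j = 0.

Lemma diag_sum_sqr_ge (s : R) (v : 'I_n2 -> R) :
  (forall k, k \in nz_cols S -> s <= \sum_a S a k ^+ 2) ->
  s * \sum_(k in nz_cols S) v k ^+ 2 <= \sum_i (\sum_k S i k * v k) ^+ 2.
Proof.
move=> s_le.
have row_sqr i : (\sum_k S i k * v k) ^+ 2 = \sum_k (S i k * v k) ^+ 2.
  apply: sum_sqr_single => j k jk.
  have [->|Sij] := eqVneq (S i j) 0; first by rewrite !mul0r.
  have [->|Sik] := eqVneq (S i k) 0; first by rewrite mul0r mulr0.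
  by move: jk; rewrite -val_eqE /= -(diag_nz_eq S_diag Sij) -(diag_nz_eq S_diag Sik) eqxx.
under [X in _ <= X]eq_bigr do rewrite row_sqr.
rewrite exchange_big /= [X in _ <= X](bigID (fun k => k \in nz_cols S)) /=.
rewrite -[X in X <= _]addr0; apply: lerD.
  rewrite mulr_sumr; apply: ler_sum => k kS.
  under eq_bigr do rewrite exprMn mulrC.
  by rewrite -mulr_sumr mulrC ler_wpM2l ?sqr_ge0 ?s_le.
by rewrite sumr_ge0 // => k _; apply: sumr_ge0 => i _; rewrite sqr_ge0.
Qed.


Lemma off_support_entry_le (X : 'M[R]_(n1, n2)) (s : R) a b :
  0 < s -> (forall k, k \in nz_cols S -> s <= \sum_a S a k ^+ 2) ->
  (\rank X <= #|nz_cols S|)%N -> minner (X - S) (X - S) <= s / 2 ->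
  a \notin nz_rows S -> b \notin nz_cols S ->
  X a b ^+ 2 * s <= 2 * minner (X - S) (X - S) ^+ 2.
Proof.
(* rank X <= |nz_cols S| yields u != 0 with X u = 0 supported on nz_cols S and b.
   As S is diagonal, |S u|^2 >= s |u_S|^2, while S u = - (X - S) u; row a of X u = 0
   bounds X a b * u b by the rest of row a of X - S. *)
move=> s_gt0 s_le rkX close a_out b_out.
have rkJ : (\rank X < #|b |: nz_cols S|)%N by rewrite cardsU1 b_out ltnS.
have [u u_neq0 [u_supp Xu0]] := kernel_vector_supp rkJ.
pose v k := u k 0.
have Xv i : \sum_k X i k * v k = 0.
  by have := congr1 (fun w : 'cV_n1 => w i 0) Xu0; rewrite !mxE.
pose ug := \sum_(k in nz_cols S) v k ^+ 2; pose ub := v b ^+ 2.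
have ug_ge0 : 0 <= ug by rewrite sumr_ge0 // => k _; rewrite sqr_ge0.
have off_b : \sum_(k | k != b) v k ^+ 2 = ug.
  rewrite /ug big_mkcond [RHS]big_mkcond; apply: eq_bigr => k _.
  have [->|kb] := eqVneq k b; first by rewrite (negbTE b_out).
  by case: ifP => //= kS; rewrite /v u_supp ?expr0n // in_setU1 (negbTE kb) kS.
have sum_v : \sum_k v k ^+ 2 = ug + ub by rewrite (bigD1 b) //= off_b addrC.
have u_gt0 : 0 < ug + ub.
  rewrite lt_def addr_ge0 ?sqr_ge0 // andbT -sum_v; apply: contra u_neq0 => /eqP v0.
  apply/eqP/colP => k; rewrite mxE; apply/eqP; rewrite -sqrf_eq0; apply/eqP.
  by apply: (psumr_eq0P _ v0) => // i _; rewrite sqr_ge0.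
have col : s * ug <= minner (X - S) (X - S) * (ug + ub).
  rewrite -sum_v; apply: le_trans (diag_sum_sqr_ge v s_le) _.
  apply: le_trans (sum_sqr_mulmx_le (X - S) v); apply/ler_sum => i _.
  have -> : \sum_k S i k * v k = - \sum_k (X - S) i k * v k.
    have := Xv i; rewrite (eq_bigr (fun k => S i k * v k + (X - S) i k * v k)) => [|k _].
      by rewrite big_split /= => /eqP; rewrite addr_eq0 => /eqP.
    by rewrite !mxE; ring.
  by rewrite sqrrN.
have row : X a b ^+ 2 * ub <= minner (X - S) (X - S) * ug.
  rewrite -exprMn -off_b; apply: le_trans (sqr_mulr_le_off b (Xv a)) _.
  rewrite off_b ler_wpM2r //.
  apply: le_trans (sum_sqr_row_le (X - S) a).
  under [X in _ <= X]eq_bigr do rewrite !mxE (nz_rowsPn _ a_out) subr0.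
  by rewrite [X in _ <= X](bigD1 b) //= lerDr sqr_ge0.
exact: entry_bound_arith (minner_ge0 _) close ug_ge0 (sqr_ge0 _) u_gt0 col row.
Qed.

Lemma rank_le_normal_diag (Y : 'M[R]_(n1, n2)) :
  (forall a b, (a \in nz_rows S) || (b \in nz_cols S) -> Y a b = 0) ->
  rank_le_normal #|nz_cols S| S Y.
Proof.
move=> Y0 eps eps_gt0; have [s s_gt0 s_le] := col_sqr_lbound S.
set c := Num.sqrt (2 / s); set Ys := \sum_a \sum_b `|Y a b|.
have c_ge0 : 0 <= c := sqrtr_ge0 _.
have Ys_ge0 : 0 <= Ys by rewrite !sumr_ge0 // => a _; rewrite sumr_ge0.
have delta_gt0 : 0 < eps / (Ys * c + 1) by rewrite divr_gt0 // ltr_wpDl // mulr_ge0.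
exists (Num.min (eps / (Ys * c + 1)) (Num.sqrt (s / 2))) => [|X rkX].
  by rewrite lt_min delta_gt0 sqrtr_gt0 divr_gt0.
rewrite lt_min => /andP[close1 close2].
set rho := fnorm (X - S).
have rho_ge0 : 0 <= rho := sqrtr_ge0 _.
have n_eq : minner (X - S) (X - S) = rho ^+ 2 by rewrite sqr_sqrtr ?minner_ge0.
have n_small : minner (X - S) (X - S) <= s / 2.
  by move: close2; rewrite /rho /fnorm ltr_sqrt ?divr_gt0 // => /ltW.
have entry a b : Y a b * (X - S) a b <= `|Y a b| * (c * rho ^+ 2).
  have [/Y0 ->|] := boolP ((a \in nz_rows S) || (b \in nz_cols S)).
    by rewrite mul0r normr0 mul0r.
  rewrite negb_or => /andP[a_out b_out].
  have := off_support_entry_le s_gt0 s_le rkX n_small a_out b_out; rewrite n_eq => bound.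
  apply: le_trans (ler_norm _) _.
  rewrite normrM ler_wpM2l // !mxE (nz_colsPn _ b_out) subr0.
  have rhs_ge0 : 0 <= c * rho ^+ 2 by rewrite mulr_ge0 ?sqr_ge0.
  rewrite -(ler_pXn2r (ltn0Sn 1)) ?nnegrE // real_normK ?num_real // exprMn.
  by rewrite sqr_sqrtr ?divr_ge0 ?(ltW s_gt0) // mulrAC ler_pdivlMr.
have total : minner Y (X - S) <= Ys * (c * rho ^+ 2).
  (* only entries off the support of S contribute, and there |X a b| <= c rho^2 *)
  rewrite minnerE /Ys mulr_suml; apply: ler_sum => a _.
  by rewrite mulr_suml; apply: ler_sum => b _; exact: entry.
apply: le_trans total _.
have : (Ys * c + 1) * rho <= eps by rewrite mulrC -ler_pdivlMr ?ltr_wpDl ?mulr_ge0 // ltW.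
nra.
Qed.

End DiagonalNormalCone.

Lemma rank_le_normal_leq (R : realType) n1 n2 (r s : nat) (W Y : 'M[R]_(n1, n2)) :
  (r <= s)%N -> rank_le_normal s W Y -> rank_le_normal r W Y.
Proof.
move=> rs nrm eps eps_gt0; have [delta delta_gt0 H] := nrm eps eps_gt0.
by exists delta => // W' rkW'; apply: H; exact: leq_trans rs.
Qed.

Lemma rank_le_normal_conj (R : realType) n1 n2 (r : nat) (U : 'M[R]_n1) (V : 'M[R]_n2)
    (W Y : 'M[R]_(n1, n2)) :
  U^T *m U = 1%:M -> V^T *m V = 1%:M ->
  rank_le_normal r (U^T *m W *m V) (U^T *m Y *m V) -> rank_le_normal r W Y.
Proof.
move=> /mulmx1C UU /mulmx1C VV nrm eps eps_gt0.
have [delta delta_gt0 H] := nrm eps eps_gt0; exists delta => // W' rkW'.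
have sub : U^T *m W' *m V - U^T *m W *m V = U^T *m (W' - W) *m V.
  by rewrite mulmxBr mulmxBl.
have fn : fnorm (U^T *m W' *m V - U^T *m W *m V) = fnorm (W' - W).
  by rewrite sub /fnorm minner_conj.
rewrite -fn => close; rewrite -(minner_conj Y (W' - W) UU VV) -sub.
by apply: H close; exact: leq_trans (mxrank_mulmx2_le _ _ _) rkW'.
Qed.

(** * Singular value decompositions and Assumption 1 *)

Section SVD.
Variables (R : realType) (n1 n2 : nat).
Variables (U : 'M[R]_n1) (V : 'M[R]_n2) (S W : 'M[R]_(n1, n2)).
Hypotheses (UU : U^T *m U = 1%:M) (VV : V^T *m V = 1%:M) (W_svd : W = U *m S *m V^T).
Hypothesis S_diag : forall (i : 'I_n1) (j : 'I_n2), (i : nat) <> j -> S i j = 0.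

Lemma svd_coord : U^T *m W *m V = S.
Proof. by rewrite W_svd !mulmxA UU mul1mx -mulmxA VV mulmx1. Qed.

Lemma svd_rank : \rank W = \rank S.
Proof.
by apply/eqP; rewrite eqn_leq {1}W_svd mxrank_mulmx2_le -{1}svd_coord mxrank_mulmx2_le.
Qed.

Lemma svd_block_eq0 (B : 'M[R]_(n1, n2)) a b :
  B *m W^T = 0 -> W^T *m B = 0 -> (a \in nz_rows S) || (b \in nz_cols S) ->
  (U^T *m B *m V) a b = 0.
Proof.
move=> BW WB /orP [aS | bS].
  apply: (trC_mulmx_eq0_nz_rows (B := U^T *m B *m V) S_diag) aS.
  rewrite -svd_coord !trmx_mul trmxK !mulmxA -(mulmxA _ U) (mulmx1C UU) mulmx1.
  by rewrite -(mulmxA _ W^T) WB mulmx0 mul0mx.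
apply: (mulmx_trC_eq0_nz_cols (B := U^T *m B *m V) S_diag) bS.
rewrite -svd_coord !trmx_mul trmxK !mulmxA -(mulmxA _ V) (mulmx1C VV) mulmx1.
by rewrite -(mulmxA _ B) BW mulmx0 mul0mx.
Qed.

Lemma rank_le_normal_svd (B : 'M[R]_(n1, n2)) :
  B *m W^T = 0 -> W^T *m B = 0 -> rank_le_normal (\rank W) W (- B).
Proof.
move=> BW WB; apply: (rank_le_normal_conj UU VV); rewrite svd_coord svd_rank.
apply: rank_le_normal_leq (mxrank_le_nz_cols S) _.
apply: (rank_le_normal_diag S_diag) => a b abS.
by rewrite mulmxN mulNmx mxE svd_block_eq0 ?oppr0.
Qed.

End SVD.

Section Gamma.
Variables (R : realType) (p q : nat) (S : 'M[R]_(p.+1, q)).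

Lemma inGamma_nz_rows (a : 'I_p.+1) : inGamma S a -> a \in nz_rows S.
Proof.
move=> /existsP [i /existsP [j /and3P [/eqP ia /eqP ja Sij]]].
by rewrite inE; apply/existsP; exists j; rewrite (_ : a = i) //; apply/val_inj.
Qed.

Lemma inGamma_nz_cols (b : 'I_q) : inGamma S b -> b \in nz_cols S.
Proof.
move=> /existsP [i /existsP [j /and3P [/eqP ia /eqP jb Sij]]].
by rewrite inE; apply/existsP; exists i; rewrite (_ : b = j) //; apply/val_inj.
Qed.

End Gamma.

Lemma free_on_tangent_svd (R : realType) p q m r (A : 'I_m -> 'M[R]_(p.+1, q))
    (U : 'M[R]_p.+1) (V : 'M[R]_q) (S W : 'M[R]_(p.+1, q)) (I0 : pred 'I_m) :
  U^T *m U = 1%:M -> V^T *m V = 1%:M -> W = U *m S *m V^T ->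
  (forall (i : 'I_p.+1) (j : 'I_q), (i : nat) <> j -> S i j = 0) ->
  (\rank W = r -> lin_indep (fun i => Tmat U V S (A i))) ->
  ((\rank W < r)%N -> lin_indep (fun i => Rmat U V S (A i))) ->
  (\rank W <= r)%N -> free_on_span (tangent_gen W) A I0.
Proof.
move=> UU VV W_svd S_diag indepT indepR rkW c _ orth.
have [BW WB] := tangent_gen_orth orth.
have masked_eq0 (P : 'I_p.+1 -> 'I_q -> bool) :
    (forall a b, P a b -> (a \in nz_rows S) || (b \in nz_cols S)) ->
    \sum_i c i *: (\matrix_(a, b) if P a b then (U^T *m A i *m V) a b else 0) = 0.
  move=> PS; apply/matrixP => a b; rewrite summxE [RHS]mxE.
  have [Pab|nPab] := boolP (P a b); last first.
    by rewrite big1 // => i _; rewrite !mxE (negbTE nPab) mulr0.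
  rewrite -[RHS](svd_block_eq0 UU VV W_svd S_diag BW WB (PS a b Pab)).
  rewrite mulmx_sumr mulmx_suml summxE.
  by apply: eq_bigr => i _; rewrite -scalemxAr -scalemxAl !mxE Pab.
case: (ltngtP (\rank W) r) rkW => // [rk_lt | rk_eq] _.
  apply: (indepR rk_lt c (masked_eq0 (fun a b => inGamma S b) _)) => a b.
  by move/inGamma_nz_cols ->; rewrite orbT.
apply: (indepT rk_eq c (masked_eq0 (fun a b => inGamma S a || inGamma S b) _)) => a b.
by case/orP => [/inGamma_nz_rows -> | /inGamma_nz_cols ->]; rewrite ?orbT.
Qed.

(** * The KKT conditions *)

(* The multiplier lambda may be taken 0: on the feasible set z' - z = A (W' - W), so
   the normal-cone component of z can carry beta d = mu. *)
Lemma KKT_of_multiplier (R : realType) p q m r (beta : R) (A : 'I_m -> 'M[R]_(p.+1, q))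
    W z (mu : 'I_m -> R) :
  0 < beta -> feasible A r W z ->
  (forall i, 0 <= mu i) -> (forall i, z i 0 != 0 -> mu i = 0) ->
  rank_le_normal r W (- (W + \sum_i mu i *: A i)) -> KKT A beta r W z.
Proof.
move=> beta_gt0 [Wz rkW] mu_ge0 mu_act nrm.
exists 0, (\col_i (mu i / beta)).
split; [|split; [|split]] => //; last by rewrite Wz subrr.
  move=> i; rewrite mxE; split=> [/mu_act -> | _]; first by rewrite mul0r.
  exact: divr_ge0 (mu_ge0 i) (ltW beta_gt0).
move=> eps eps_gt0; have [delta delta_gt0 near] := nrm eps eps_gt0.
exists delta; split=> // W' z' [Wz' rkW'] _ close.
have fn_le := fnorm_le_pnorm (W' - W) (z' - z).
have dz : z' - z = Aop A (W' - W) by rewrite -Wz' -Wz opprD addrACA subrr add0r AopB.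
have mu_col : beta *: (\col_i (mu i / beta)) - 0 = \col_i mu i.
  by apply/matrixP => i j; rewrite !mxE subr0 mulrCA divff ?mulr1 ?gt_eqF.
have adj : Aadj A (\col_i mu i) = \sum_i mu i *: A i.
  by apply: eq_bigr => i _; rewrite mxE.
rewrite (_ : minner _ (z' - z) = - minner (\sum_i mu i *: A i) (W' - W)); last first.
  by rewrite mu_col dz minnerNl -minner_Aadj adj.
rewrite (_ : Aadj A 0 = 0); last by rewrite /Aadj big1 // => i _; rewrite mxE scale0r.
rewrite addr0 -minnerNl -minnerDl -opprD.
apply: le_trans (near W' rkW' (le_lt_trans fn_le close)) _.
by rewrite ler_wpM2l // ltW.
Qed.

Theorem theorem1 (R : realType) (p q m r : nat) (beta : R)
    (A : 'I_m -> 'M[R]_(p.+1, q)) (W : 'M[R]_(p.+1, q)) (z : 'cV[R]_m) :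
  0 < beta -> (0 < r)%N -> (r < minn p.+1 q)%N ->
  local_min A beta r W z -> assumption1 A r W ->
  KKT A beta r W z.
Proof.
move=> beta_gt0 _ _ W_min [U [V [S [[UU VV W_svd S_diag _] [indepT indepR]]]]].
have [[Wz rkW] _] := W_min.
pose I0 i := z i 0 == 0.
have free : free_on_span (tangent_gen W) A I0.
  exact: free_on_tangent_svd UU VV W_svd S_diag indepT indepR rkW.
have first_order d : rank_dir W (r - \rank W) d ->
    (forall i, I0 i -> minner (A i) d < 0) -> 0 <= minner W d.
  move=> Kd descent; apply: local_min_first_order (ltW beta_gt0) W_min Kd _.
  by move=> i /eqP /descent.
have [mu [mu_ge0 mu_act mu_orth]] := lagrange_multiplier free (rank_dir0 W _)
  (@rank_dir_opp _ _ _ W _) (@rank_dir_add_span _ _ _ W _) first_order.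
apply: (KKT_of_multiplier beta_gt0 (conj Wz rkW) mu_ge0) => [i /negbTE zi|].
  by apply: mu_act; rewrite /I0 zi.
have [BW WB] := tangent_gen_orth (fun t => mu_orth _ (rank_dir_tangent_gen _ _ t)).
case: (ltngtP (\rank W) r) rkW => // [rk_lt | <-] _; last first.
  exact: rank_le_normal_svd UU VV W_svd S_diag _ BW WB.
have -> : W + \sum_i mu i *: A i = 0.
  apply/matrixP => a b; rewrite -minner_delta [RHS]mxE.
  by apply: mu_orth; apply: rank_dir_delta; rewrite subn_gt0.
by rewrite oppr0; exact: rank_le_normal0.
Qed.
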